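(* Let $\alpha\in\mathbb{K}((t^{-1}))$ with $a_0(\alpha)=0$, and run the algorithm described in the context. Then: (1) All the partial quotients required by the algorithm exist, so $\beta$ and $\gamma$ are well defined, and $\alpha=\beta+\gamma$. Moreover, for every $n\ge1$: if $b_n$ is defined then $c_i=a_i(\alpha-[0;b_1,\dots,b_n])$ for every $1\le i\le n-1$; and if $c_n$ is defined then $b_i=a_i(\alpha-[0;c_1,\dots,c_n])$ and $c_i=a_i(\alpha-[0;b_1,\dots,b_n])$ for every $1\le i\le n$. (2) If $c_1$ is defined then $\deg c_1\ge 2\deg b_1+1$; and for every $n\ge2$, if $b_n$ is defined then $\deg b_n\ge\deg c_{n-1}+2$, and if $c_n$ is defined then $\deg c_n\ge \deg b_n+2$. (3) If $\alpha=p/q$ is a rational function ($p,q\in\mathbb{K}[t]$, $q\neq 0$), then the algorithm stops after at most $\deg(q)/2$ steps; in particular $\beta,\gamma\in\mathbb{K}(t)$.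
   Context: $\mathbb{K}((t^{-1}))$ is the field of formal Laurent series over a field $\mathbb{K}$, with $\deg\alpha=\sup\{-n:\alpha_n\ne0\}$ for $\alpha=\sum\alpha_nt^{-n}$. Every $\alpha$ has a unique continued fraction expansion $[a_0;a_1,a_2,\dots]$ with $a_n\in\mathbb{K}[t]$, $\deg a_n\ge1$ for $n\ge1$, finite iff $\alpha\in\mathbb{K}(t)$; $a_n(\alpha)$ denotes its $n$-th partial quotient. For polynomials $b_1,\dots,b_n$ of degree $\ge1$, $[0;b_1,\dots,b_n]$ is the finite continued fraction (equal to $0$ if $n=0$). Algorithm (Laurent analogue of Shulga's algorithm): given $\alpha$ with $a_0(\alpha)=0$, for $n=0,1,2,\dots$, with $b_1,\dots,b_n,c_1,\dots,c_n$ already defined: if $\alpha=[0;b_1,\dots,b_n]+[0;c_1,\dots,c_n]$, set $\beta=[0;b_1,\dots,b_n]$, $\gamma=[0;c_1,\dots,c_n]$ and stop. Otherwise set $b_{n+1}=a_{n+1}(\alpha-[0;c_1,\dots,c_n])$. If then $\alpha=[0;b_1,\dots,b_{n+1}]+[0;c_1,\dots,c_n]$, set $\beta=[0;b_1,\dots,b_{n+1}]$, $\gamma=[0;c_1,\dots,c_n]$ and stop. Otherwise set $c_{n+1}=a_{n+1}(\alpha-[0;b_1,\dots,b_{n+1}])$ and continue. If the algorithm never stops, set $\beta=[0;b_1,b_2,\dots]$ and $\gamma=[0;c_1,c_2,\dots]$. *)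

From HB Require Import structures.
From mathcomp Require Import all_boot all_order all_algebra.
From Stdlib Require Import ClassicalEpsilon.

Set Implicit Arguments.
Unset Strict Implicit.
Unset Printing Implicit Defensive.

Import Order.TTheory GRing.Theory Num.Theory.
Local Open Scope ring_scope.

Section Laurent.
Variable K : fieldType.

(* A Laurent series is represented by its coefficient function:
   f n is the coefficient of t^n.  Elements of K((t^{-1})) are those
   functions whose support is bounded above. *)
Definition lseries := int -> K.

Definition is_laurent (f : lseries) : Prop :=
  exists N : int, forall n : int, N < n -> f n = 0.

(* some upper bound of the support (any valid one, chosen classically) *)
Definition lbound (f : lseries) : int :=
  ClassicalEpsilon.epsilon (inhabits 0)
    (fun N : int => forall n : int, N < n -> f n = 0).

Definition lzero : lseries := fun _ => 0.
Definition lone : lseries := fun n => if n == 0 then 1 else 0.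
Definition ladd (f g : lseries) : lseries := fun n => f n + g n.
Definition lopp (f : lseries) : lseries := fun n => - f n.
Definition lsub (f g : lseries) : lseries := ladd f (lopp g).

(* Cauchy product: (fg)_n = sum_{i+j=n} f_i g_j; the index i ranges over
   the window [n - lbound g, n - lbound g + |lbound f + lbound g - n + 1|),
   which contains every i with f_i g_{n-i} <> 0. *)
Definition lmul (f g : lseries) : lseries := fun n =>
  \sum_(k < absz (lbound f + lbound g - n + 1))
     f (n - lbound g + k%:Z) * g (lbound g - k%:Z).

(* multiplicative inverse in K((t^{-1})) (0 if it does not exist) *)
Definition linv (f : lseries) : lseries :=
  match excluded_middle_informative
          (exists g : lseries, is_laurent g /\ lmul f g = lone) with
  | left H => proj1_sig (constructive_indefinite_description _ H)
  | right _ => lzero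
  end.

Definition lpoly (p : {poly K}) : lseries := fun n =>
  match n with Posz m => p`_m | Negz _ => 0 end.

Definition lpolypart (f : lseries) : {poly K} :=
  \poly_(i < (absz (lbound f)).+1) f (Posz i).

Fixpoint cq (f : lseries) (n : nat) : option lseries :=
  match n with
  | 0 => Some f
  | n'.+1 =>
      match cq f n' with
      | None => None
      | Some x =>
          let r := lsub x (lpoly (lpolypart x)) in
          if excluded_middle_informative (r = lzero) then None
          else Some (linv r)
      end
  end.

(* a_n(f): the n-th partial quotient, None if the expansion is shorter *)
Definition pq (f : lseries) (n : nat) : option {poly K} :=
  omap lpolypart (cq f n).

Definition cf0 (bs : seq {poly K}) : lseries :=
  foldr (fun b x => linv (ladd (lpoly b) x)) lzero bs.

Definition pdeg (p : {poly K}) : nat := (size p).-1.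

Definition lconv (u : nat -> lseries) (l : lseries) : Prop :=
  forall m : int, exists N : nat, forall n : nat, (N <= n)%N ->
    forall k : int, m <= k -> u n k = l k.

Definition is_ratfun (f : lseries) : Prop :=
  exists p q : {poly K}, q != 0 /\ f = lmul (lpoly p) (linv (lpoly q)).

(* state after some iterations: the lists (b_1..b_k), (c_1..c_l) built so far,
   and whether the algorithm is still running, has stopped, or failed
   (a required partial quotient did not exist). *)
Inductive alg_st :=
| Run of seq {poly K} & seq {poly K}
| Stop of seq {poly K} & seq {poly K}
| Fail of seq {poly K} & seq {poly K}.

Definition st_b (s : alg_st) : seq {poly K} :=
  match s with Run bs _ | Stop bs _ | Fail bs _ => bs end.
Definition st_c (s : alg_st) : seq {poly K} :=
  match s with Run _ cs | Stop _ cs | Fail _ cs => cs end.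
Definition is_stop (s : alg_st) : bool :=
  if s is Stop _ _ then true else false.

(* iteration number n = size bs = size cs of the algorithm *)
Definition alg_step (alpha : lseries) (s : alg_st) : alg_st :=
  match s with
  | Run bs cs =>
      let n := size bs in
      if excluded_middle_informative (alpha = ladd (cf0 bs) (cf0 cs))
      then Stop bs cs
      else match pq (lsub alpha (cf0 cs)) n.+1 with
           | None => Fail bs cs
           | Some b =>
               let bs' := rcons bs b in
               if excluded_middle_informative (alpha = ladd (cf0 bs') (cf0 cs))
               then Stop bs' cs
               else match pq (lsub alpha (cf0 bs')) n.+1 with
                    | None => Fail bs' cs
                    | Some c => Run bs' (rcons cs c)
                    end
           end
  | _ => s
  end.

Definition alg_state (alpha : lseries) (n : nat) : alg_st :=
  iter n (alg_step alpha) (Run [::] [::]).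

Definition alg_b (alpha : lseries) (n : nat) : option {poly K} :=
  let bs := st_b (alg_state alpha n) in
  if (0 < n <= size bs)%N then Some (nth 0 bs n.-1) else None.
Definition alg_c (alpha : lseries) (n : nat) : option {poly K} :=
  let cs := st_c (alg_state alpha n) in
  if (0 < n <= size cs)%N then Some (nth 0 cs n.-1) else None.

Definition alg_bs (alpha : lseries) (n : nat) : seq {poly K} :=
  take n (st_b (alg_state alpha n)).
Definition alg_cs (alpha : lseries) (n : nat) : seq {poly K} :=
  take n (st_c (alg_state alpha n)).

Definition alg_result (alpha beta gamma : lseries) : Prop :=
  (exists n bs cs, alg_state alpha n = Stop bs cs /\
                   beta = cf0 bs /\ gamma = cf0 cs)
  \/ ((forall n, exists bs cs, alg_state alpha n = Run bs cs) /\
      lconv (fun n => cf0 (alg_bs alpha n)) beta /\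
      lconv (fun n => cf0 (alg_cs alpha n)) gamma).

End Laurent.

(* Laurent series with support bounded above form a field, in which continued
   fractions have the classical approximation property: writing [s(B)] for the
   sum of the degrees of the entries of [B], the list [B] begins the expansion of
   [y] (with [|y| < 1]) iff [deg (y - [0;B]) < -2 s(B)], and then
   [deg (y - [0;B]) = -(2 s(B) + deg a)] where [a] is the next partial quotient.
   Along the algorithm, [B] begins the expansion of [alpha - [0;C]] and [C] that
   of [alpha - [0;B]].  Measuring the error [alpha - [0;B] - [0;C]] through both
   expansions shows that the next partial quotient has degree more than twice the
   gap [s(C) - s(B)], and that both prefix relations survive the extension; the
   gap thus grows at every half-step.  For [alpha = p/q] the nonzero error is a
   rational function whose denominator has degree at most [deg q + s(B) + s(C)],
   which bounds the gap by [deg q]. *)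

From HB Require Import structures.
From mathcomp Require Import all_boot all_order all_algebra.
From mathcomp Require Import zify ring.
From mathcomp Require boolp.
From Stdlib Require Import Classical ClassicalEpsilon FunctionalExtensionality ProofIrrelevance.

Set Implicit Arguments.
Unset Strict Implicit.
Unset Printing Implicit Defensive.

Import Order.TTheory GRing.Theory Num.Theory.
Local Open Scope ring_scope.

Section SeriesArithmetic.
Variable K : fieldType.
Implicit Types f g h : lseries K.

Definition supp_le f (N : int) := forall n : int, N < n -> f n = 0.

Lemma supp_le_lbound f : is_laurent f -> supp_le f (lbound f).
Proof. exact: epsilon_spec. Qed.

Lemma supp_le_nz f N i : supp_le f N -> f i != 0 -> i <= N.
Proof. by move=> bf; apply: contraNle => /bf ->. Qed.

Lemma supp_leW f N M : supp_le f N -> N <= M -> supp_le f M.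
Proof. by move=> H le n lt; apply: H; lia. Qed.

Definition wsum (lo : int) (M : nat) (F : int -> K) := \sum_(k < M) F (lo + k%:Z).

Lemma wsum_widen (F : int -> K) (lo lo' : int) (M M' : nat) :
  lo' <= lo -> lo + M%:Z <= lo' + M'%:Z ->
  (forall i, lo' <= i < lo' + M'%:Z -> ~~ (lo <= i < lo + M%:Z) -> F i = 0) ->
  wsum lo M F = wsum lo' M' F.
Proof.
move=> h1 h2 hv.
pose s := absz (lo - lo'); pose r := absz (lo' + M'%:Z - (lo + M%:Z))%R.
have hs : lo = lo' + s%:Z by rewrite /s; lia.
have -> : M' = (s + M + r)%N by rewrite /s /r; lia.
rewrite /wsum; symmetry.
rewrite -(big_mkord xpredT (fun k => F (lo' + k%:Z))).
rewrite -(big_mkord xpredT (fun k => F (lo + k%:Z))).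
rewrite (big_cat_nat _ (n := (s + M)%N)) ?leq_addr //=.
rewrite (big_cat_nat _ (n := s) (m := 0%N)) ?leq_addr //=.
rewrite [X in X + _ + _ = _]big1_seq; last first.
  by move=> k /andP[_]; rewrite mem_index_iota => /andP[_ hk]; apply: hv; lia.
rewrite [X in _ + _ + X = _]big1_seq; last first.
  by move=> k /andP[_]; rewrite mem_index_iota => /andP[hk1 hk2]; apply: hv; lia.
rewrite add0r addr0 -{1}(add0n s) big_addn addKn.
by apply: eq_bigr => k _; congr F; rewrite hs; lia.
Qed.

Lemma wsum_eq (F : int -> K) (lo lo' : int) (M M' : nat) :
  (forall i, F i != 0 -> (lo <= i < lo + M%:Z) /\ (lo' <= i < lo' + M'%:Z)) ->
  wsum lo M F = wsum lo' M' F.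
Proof.
move=> H.
pose lo2 := Order.min lo lo'; pose hi2 := Order.max (lo + M%:Z) (lo' + M'%:Z).
pose M2 := absz (hi2 - lo2)%R.
have e1 : hi2 = lo2 + M2%:Z.
  rewrite /M2 /hi2 /lo2; case: (leP lo lo'); case: (leP (lo + M%:Z) (lo' + M'%:Z)); lia.
have hv lo0 M0 : (forall i, F i != 0 -> lo0 <= i < lo0 + M0%:Z) ->
    forall i, lo2 <= i < lo2 + M2%:Z -> ~~ (lo0 <= i < lo0 + M0%:Z) -> F i = 0.
  by move=> h i _ hn; apply/eqP; apply: contraNT hn => /h.
have hlo2 : lo2 <= lo /\ lo2 <= lo' by rewrite /lo2; case: (leP lo lo'); lia.
have hhi2 : lo + M%:Z <= hi2 /\ lo' + M'%:Z <= hi2.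
  by rewrite /hi2; case: (leP (lo + M%:Z) (lo' + M'%:Z)); lia.
rewrite (@wsum_widen F lo lo2 M M2); first last.
- by apply: hv => i /H [].
- by rewrite -e1; case: hhi2.
- by case: hlo2.
rewrite (@wsum_widen F lo' lo2 M' M2) //; first last.
- by apply: hv => i /H [].
- by rewrite -e1; case: hhi2.
- by case: hlo2.
Qed.

Lemma wsumD (lo : int) (M : nat) (F G : int -> K) :
  wsum lo M (fun i => F i + G i) = wsum lo M F + wsum lo M G.
Proof. by rewrite /wsum big_split. Qed.

Lemma wsum_rev (lo c : int) (M : nat) (F : int -> K) :
  wsum lo M (fun i => F (c - i)) = wsum (c - (lo + M%:Z) + 1) M F.
Proof.
rewrite /wsum (reindex_inj rev_ord_inj) /=; apply: eq_bigr => k _.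
by congr F; have := ltn_ord k; lia.
Qed.

Lemma lmul_wsum f g (lo : int) (M : nat) (n : int) : is_laurent f -> is_laurent g ->
  (forall i, f i * g (n - i) != 0 -> lo <= i < lo + M%:Z) ->
  lmul f g n = wsum lo M (fun i => f i * g (n - i)).
Proof.
move=> Lf Lg H.
have bf := supp_le_lbound Lf; have bg := supp_le_lbound Lg.
have -> : lmul f g n = wsum (n - lbound g) (absz (lbound f + lbound g - n + 1))
          (fun i => f i * g (n - i)).
  by rewrite /lmul /wsum; apply: eq_bigr => k _; congr (_ * g _); lia.
apply: wsum_eq => i hi; split; last exact: H.
move: hi; rewrite mulf_eq0 negb_or => /andP[/(supp_le_nz bf) h1 /(supp_le_nz bg) h2].
lia.
Qed.

Lemma lmul_wsum_supp f g (Nf Ng lo : int) (M : nat) (n : int) :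
  supp_le f Nf -> supp_le g Ng -> lo <= n - Ng -> Nf < lo + M%:Z ->
  lmul f g n = wsum lo M (fun i => f i * g (n - i)).
Proof.
move=> bf bg h1 h2; apply: lmul_wsum; [by exists Nf|by exists Ng|] => i.
by rewrite mulf_eq0 negb_or => /andP[/(supp_le_nz bf) e1 /(supp_le_nz bg) e2]; lia.
Qed.

Lemma supp_le_lmul f g (Nf Ng : int) :
  supp_le f Nf -> supp_le g Ng -> supp_le (lmul f g) (Nf + Ng).
Proof.
move=> bf bg n hn.
rewrite (@lmul_wsum_supp f g Nf Ng (n - Ng) 0 n) //; last lia.
by rewrite /wsum big_ord0.
Qed.

Lemma supp_le_ladd f g N : supp_le f N -> supp_le g N -> supp_le (ladd f g) N.
Proof. by move=> bf bg n hn; rewrite /ladd bf ?bg ?addr0. Qed.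

Lemma lmul_laurent f g : is_laurent f -> is_laurent g -> is_laurent (lmul f g).
Proof. by move=> [Nf bf] [Ng bg]; exists (Nf + Ng); apply: supp_le_lmul. Qed.

Lemma ladd_laurent f g : is_laurent f -> is_laurent g -> is_laurent (ladd f g).
Proof.
move=> [Nf bf] [Ng bg]; exists (Order.max Nf Ng).
by apply: supp_le_ladd; [apply: (supp_leW bf)|apply: (supp_leW bg)];
  rewrite ?le_max ?lexx ?orbT.
Qed.

Lemma lopp_laurent f : is_laurent f -> is_laurent (lopp f).
Proof. by move=> [N bf]; exists N => n hn; rewrite /lopp bf ?oppr0. Qed.

Lemma lzero_laurent : is_laurent (lzero K).
Proof. by exists 0. Qed.

Lemma lone_supp : supp_le (lone K) 0.
Proof. by move=> n hn; rewrite /lone; case: eqP => // e; move: hn; rewrite e ltxx. Qed.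

Lemma lone_laurent : is_laurent (lone K).
Proof. by exists 0; apply: lone_supp. Qed.

Lemma linv_laurent f : is_laurent (linv f).
Proof.
rewrite /linv; case: excluded_middle_informative => [H|_]; last exact: lzero_laurent.
by case: (constructive_indefinite_description _ H) => g [].
Qed.

Lemma lpoly_laurent (p : {poly K}) : is_laurent (lpoly p).
Proof.
exists (Posz (size p)) => -[m|//] hm.
by rewrite /lpoly nth_default //; move: hm; rewrite ltz_nat => /ltnW.
Qed.

Lemma lmulC f g : is_laurent f -> is_laurent g -> lmul f g = lmul g f.
Proof.
move=> [Nf bf] [Ng bg]; apply: functional_extensionality => n.
pose M := (absz (Nf + Ng - n)%R + 1)%N.
rewrite (@lmul_wsum_supp f g Nf Ng (n - Ng) M n) //; last by rewrite /M; lia.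
rewrite (@lmul_wsum_supp g f Ng Nf (n - (n - Ng + M%:Z) + 1) M n) //;
  try by rewrite /M; lia.
rewrite -wsum_rev /wsum; apply: eq_bigr => k _.
by rewrite mulrC; congr (_ * _); congr f; lia.
Qed.

Lemma lmulDl f g h : is_laurent f -> is_laurent g -> is_laurent h ->
  lmul (ladd f g) h = ladd (lmul f h) (lmul g h).
Proof.
move=> [Nf bf] [Ng bg] [Nh bh]; apply: functional_extensionality => n.
pose N := Order.max Nf Ng.
have bf' : supp_le f N by apply: (supp_leW bf); rewrite le_max lexx.
have bg' : supp_le g N by apply: (supp_leW bg); rewrite le_max lexx orbT.
pose M := (absz (N + Nh - n)%R + 1)%N.
have hM : N < n - Nh + M%:Z by rewrite /M; lia.
rewrite /ladd (@lmul_wsum_supp _ h N Nh (n - Nh) M n) //; last exact: supp_le_ladd.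
rewrite (@lmul_wsum_supp f h N Nh (n - Nh) M n) //.
rewrite (@lmul_wsum_supp g h N Nh (n - Nh) M n) //.
by rewrite -wsumD; apply: eq_bigr => k _; rewrite mulrDl.
Qed.

Lemma lmul1 f : is_laurent f -> lmul (lone K) f = f.
Proof.
move=> Lf; apply: functional_extensionality => n.
rewrite (@lmul_wsum (lone K) f 0 1 n) //; last 2 first.
- exact: lone_laurent.
- move=> i; rewrite /lone; have [->|_] := eqVneq i 0; first by lia.
  by rewrite mul0r eqxx.
by rewrite /wsum big_ord1 /= /lone add0r eqxx mul1r subr0.
Qed.

Lemma lmulA f g h : is_laurent f -> is_laurent g -> is_laurent h ->
  lmul f (lmul g h) = lmul (lmul f g) h.
Proof.
move=> [Nf bf] [Ng bg] [Nh bh]; apply: functional_extensionality => n.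
pose loI := n - Nh; pose MI := (absz (Nf + Ng - loI)%R + 1)%N.
pose loJ := loI - Ng; pose MJ := (absz (Nf - loJ)%R + 1)%N.
have c1 : loJ <= n - (Ng + Nh) by rewrite /loJ /loI; lia.
have c2 : Nf < loJ + MJ%:Z by rewrite /MJ /loJ /loI; lia.
have c3 : loI <= n - Nh by rewrite /loI; lia.
have c4 : Nf + Ng < loI + MI%:Z by rewrite /MI /loI; lia.
rewrite (lmul_wsum_supp bf (supp_le_lmul bg bh) c1 c2).
rewrite (lmul_wsum_supp (supp_le_lmul bf bg) bh c3 c4) /wsum.
under [in RHS]eq_bigr => k _.
  have c5 : loJ <= (loI + k%:Z) - Ng by rewrite /loJ /loI; lia.
  rewrite (lmul_wsum_supp bf bg c5 c2) /wsum mulr_suml.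
  over.
rewrite /= exchange_big /=; apply: eq_bigr => l _.
have [f0|fn0] := eqVneq (f (loJ + l%:Z)) 0.
  by rewrite f0 mul0r big1 // => k _; rewrite !mul0r.
have jle := supp_le_nz bf fn0.
have c6 : loI - (loJ + l%:Z) <= n - (loJ + l%:Z) - Nh by rewrite /loI; lia.
have c7 : Ng < loI - (loJ + l%:Z) + MI%:Z by rewrite /MI /loI /loJ in jle *; lia.
rewrite (lmul_wsum_supp bg bh c6 c7) /wsum mulr_sumr; apply: eq_bigr => k _.
by rewrite -mulrA; congr (_ * (_ * _)); [congr g|congr h]; lia.
Qed.

End SeriesArithmetic.

Section LaurentRing.
Variable K : fieldType.

Record laurent := Laurent { lval : lseries K; lvalP : is_laurent lval }.

Lemma lval_inj : injective lval.
Proof.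
move=> [f Pf] [g Pg] /= e; move: Pf Pg; rewrite e => Pf Pg.
by rewrite (proof_irrelevance _ Pf Pg).
Qed.

HB.instance Definition _ := boolp.gen_eqMixin laurent.
HB.instance Definition _ := boolp.gen_choiceMixin laurent.

Definition lau0 := Laurent (@lzero_laurent K).
Definition lau1 := Laurent (@lone_laurent K).
Definition lau_add (x y : laurent) := Laurent (ladd_laurent (lvalP x) (lvalP y)).
Definition lau_opp (x : laurent) := Laurent (lopp_laurent (lvalP x)).
Definition lau_mul (x y : laurent) := Laurent (lmul_laurent (lvalP x) (lvalP y)).

Lemma lau_eqP (x y : laurent) : (forall n, lval x n = lval y n) -> x = y.
Proof. by move=> H; apply: lval_inj; apply: functional_extensionality. Qed.

Lemma lau_addA : associative lau_add.
Proof. by move=> x y z; apply: lau_eqP => n; rewrite /= /ladd addrA. Qed.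
Lemma lau_addC : commutative lau_add.
Proof. by move=> x y; apply: lau_eqP => n; rewrite /= /ladd addrC. Qed.
Lemma lau_add0 : left_id lau0 lau_add.
Proof. by move=> x; apply: lau_eqP => n; rewrite /= /ladd /lzero add0r. Qed.
Lemma lau_addN : left_inverse lau0 lau_opp lau_add.
Proof. by move=> x; apply: lau_eqP => n; rewrite /= /ladd /lopp /lzero addNr. Qed.

HB.instance Definition _ :=
  GRing.isZmodule.Build laurent lau_addA lau_addC lau_add0 lau_addN.

Lemma lau_mulA : associative lau_mul.
Proof. by move=> x y z; apply: lval_inj; rewrite /= lmulA //; apply: lvalP. Qed.
Lemma lau_mulC : commutative lau_mul.
Proof. by move=> x y; apply: lval_inj; rewrite /= lmulC //; apply: lvalP. Qed.
Lemma lau_mul1 : left_id lau1 lau_mul.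
Proof. by move=> x; apply: lval_inj; rewrite /= lmul1 //; apply: lvalP. Qed.
Lemma lau_mulDl : left_distributive lau_mul lau_add.
Proof. by move=> x y z; apply: lval_inj; rewrite /= lmulDl //; apply: lvalP. Qed.
Lemma lau1_neq0 : lau1 != lau0.
Proof.
apply/eqP => /(congr1 (fun x => lval x 0)) /=; rewrite /lone /lzero eqxx.
by move/eqP; rewrite oner_eq0.
Qed.

HB.instance Definition _ := GRing.Zmodule_isComNzRing.Build laurent
  lau_mulA lau_mulC lau_mul1 lau_mulDl lau1_neq0.

Implicit Types x y z u : laurent.

Definition lcoef x (n : int) : K := lval x n.

Lemma lcoefD x y n : lcoef (x + y) n = lcoef x n + lcoef y n. Proof. by []. Qed.
Lemma lcoefN x n : lcoef (- x) n = - lcoef x n. Proof. by []. Qed.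
Lemma lcoefB x y n : lcoef (x - y) n = lcoef x n - lcoef y n. Proof. by []. Qed.
Lemma lcoef1 n : lcoef 1 n = if n == 0 then 1 else 0. Proof. by []. Qed.
Lemma lvalM x y : lval (x * y) = lmul (lval x) (lval y). Proof. by []. Qed.

Definition deg_le x (N : int) := supp_le (lval x) N.

Lemma deg_leW x N M : deg_le x N -> N <= M -> deg_le x M.
Proof. exact: supp_leW. Qed.

Lemma deg_leM x y N M : deg_le x N -> deg_le y M -> deg_le (x * y) (N + M).
Proof. exact: supp_le_lmul. Qed.

Lemma deg_leD x y N : deg_le x N -> deg_le y N -> deg_le (x + y) N.
Proof. exact: supp_le_ladd. Qed.

Lemma deg_leN x N : deg_le x N -> deg_le (- x) N.
Proof. by move=> h n hn; rewrite /= /lopp h ?oppr0. Qed.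

Lemma deg_leB x y N : deg_le x N -> deg_le y N -> deg_le (x - y) N.
Proof. by move=> h1 h2; apply: deg_leD => //; apply: deg_leN. Qed.

Lemma deg_le0 N : deg_le 0 N. Proof. by []. Qed.

Lemma deg_le1 : deg_le 1 0. Proof. exact: lone_supp. Qed.

Lemma deg_leX x N j : deg_le x N -> deg_le (x ^+ j) (N * j%:Z).
Proof.
move=> h; elim: j => [|j IH]; first by rewrite mulr0 expr0; exact: deg_le1.
by rewrite exprS (_ : N * j.+1%:Z = N + N * j%:Z); [apply: deg_leM|lia].
Qed.

Lemma deg_le_sum (I : Type) (r : seq I) (P : pred I) (F : I -> laurent) N :
  (forall i, P i -> deg_le (F i) N) -> deg_le (\sum_(i <- r | P i) F i) N.
Proof.
by move=> H; apply: (big_ind (fun z => deg_le z N)) => //; move=> *; apply: deg_leD.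
Qed.

Lemma lcoef_deg_le x N n : deg_le x N -> N < n -> lcoef x n = 0.
Proof. exact. Qed.

Lemma lcoef_eq_deg_leB x y N n : deg_le (x - y) N -> N < n -> lcoef x n = lcoef y n.
Proof. by move=> h /(lcoef_deg_le h) /eqP; rewrite lcoefB subr_eq0 => /eqP. Qed.

Lemma lcoefM_eq f g g' (Nf n : int) : deg_le f Nf ->
  (forall k, n - Nf <= k -> lcoef g k = lcoef g' k) -> lcoef (f * g) n = lcoef (f * g') n.
Proof.
move=> bf H.
have [Ng bg] := lvalP g; have [Ng' bg'] := lvalP g'.
pose N := Order.max Ng Ng'.
have bg1 : deg_le g N by apply: (supp_leW bg); rewrite le_max lexx.
have bg2 : deg_le g' N by apply: (supp_leW bg'); rewrite le_max lexx orbT.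
pose M := (absz (Nf + N - n)%R + 1)%N.
have c2 : Nf < n - N + M%:Z by rewrite /M; lia.
rewrite /lcoef !lvalM (lmul_wsum_supp bf bg1 (lexx _) c2).
rewrite (lmul_wsum_supp bf bg2 (lexx _) c2); apply: eq_bigr => k _.
have [f0|fn0] := eqVneq (lval f (n - N + k%:Z)) 0; first by rewrite f0 !mul0r.
have hle := supp_le_nz bf fn0.
by congr (_ * _); apply: H; lia.
Qed.

Definition monomial (a : int) (c : K) : laurent.
Proof.
refine (@Laurent (fun n => if n == a then c else 0) _).
by exists a => n hn; case: eqP => // e; move: hn; rewrite e ltxx.
Defined.

Lemma lcoef_monomialM a c x n : lcoef (monomial a c * x) n = c * lcoef x (n - a).
Proof.
rewrite /lcoef lvalM (@lmul_wsum _ _ _ a 1 n); [|exact: lvalP|exact: lvalP|].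
  by rewrite /wsum big_ord1 /= addr0 eqxx.
by move=> i; rewrite /=; have [->|_] := eqVneq i a; [lia|rewrite mul0r eqxx].
Qed.

Definition has_deg x (d : int) := lcoef x d != 0 /\ deg_le x d.

Lemma has_deg_le x a b : has_deg x a -> deg_le x b -> a <= b.
Proof. by move=> [h _] hb; apply: supp_le_nz hb h. Qed.

Lemma has_deg_uniq x a b : has_deg x a -> has_deg x b -> a = b.
Proof.
move=> ha hb; apply/eqP; rewrite eq_le (has_deg_le ha) ?(has_deg_le hb) //.
- by case: ha.
- by case: hb.
Qed.

Lemma has_deg_neq0 x a : has_deg x a -> x != 0.
Proof. by move=> [h _]; apply: contraNneq h => ->. Qed.

Lemma has_deg_deg_le x a b : has_deg x a -> a <= b -> deg_le x b.
Proof. by move=> [_ h]; apply: deg_leW. Qed.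

Lemma has_deg_exists x : x != 0 -> exists d, has_deg x d.
Proof.
move=> xn0.
have [k0 hk0] : exists k0, lcoef x k0 != 0.
  apply: NNPP => H; move/eqP: xn0; apply; apply: lau_eqP => n.
  by apply/eqP/negPn/negP => hn; apply: H; exists n.
have [N bN] := lvalP x.
have k0N : k0 <= N by rewrite leNgt; apply/negP => /bN; apply/eqP.
pose P j := lcoef x (N - j%:Z) != 0.
have exP : exists j, P j.
  by exists (absz (N - k0)%R); rewrite /P (_ : N - _ = k0) //; lia.
case: (ex_minnP exP) => j0 Pj0 minj.
exists (N - j0%:Z); split => // n hn.
have [nN|nN] := ltP N n; first exact: bN.
have : ~~ P (absz (N - n)%R) by apply/negP => /minj; lia.
by rewrite /P negbK (_ : N - _ = n) => [/eqP|]; last lia.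
Qed.

Lemma has_degM x y a b : has_deg x a -> has_deg y b -> has_deg (x * y) (a + b).
Proof.
move=> [ha ba] [hb bb]; split; last exact: deg_leM.
have c1 : a <= a + b - b by lia.
have c2 : a < a + (1%N)%:Z by lia.
rewrite /lcoef lvalM (lmul_wsum_supp ba bb c1 c2) /wsum big_ord1 /= addr0.
by rewrite (_ : a + b - a = b) ?mulf_neq0 //; lia.
Qed.

Lemma has_degD x y a : has_deg x a -> deg_le y (a - 1) -> has_deg (x + y) a.
Proof.
move=> [ha ba] hy; split; first by rewrite lcoefD (lcoef_deg_le hy) ?addr0 //; lia.
by apply: deg_leD => //; apply: (deg_leW hy); lia.
Qed.

Lemma has_degN x a : has_deg x a -> has_deg (- x) a.
Proof. by move=> [h b]; split; [rewrite lcoefN oppr_eq0|exact: deg_leN]. Qed.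

(* [1 - u] with [deg u < 0] is inverted by the geometric series of [u], whose
   partial sums stabilise coefficientwise. *)
Lemma subr1_inv_exists u : deg_le u (-1) -> exists g, (1 - u) * g = 1.
Proof.
move=> bu.
pose S M := \sum_(j < M) u ^+ j.
have buj j : deg_le (u ^+ j) (- j%:Z).
  by have := @deg_leX u (-1) j bu; rewrite (_ : -1 * j%:Z = - j%:Z) //; lia.
have stab M M' k : (M <= M')%N -> - M%:Z < k -> lcoef (S M') k = lcoef (S M) k.
  move=> le hk; rewrite /S -!(big_mkord xpredT (fun j => u ^+ j)).
  rewrite (big_cat_nat _ (n := M)) // lcoefD [X in _ + X](lcoef_deg_le _ hk) ?addr0 //.
  rewrite big_seq; apply: deg_le_sum => j; rewrite mem_index_iota => /andP[h1 _].
  by apply: (deg_leW (buj j)); lia.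
have stabS M k : - M%:Z < k -> lcoef (S M) k = lcoef (S (absz k).+1) k.
  move=> hk; have [le|le] := leqP M (absz k).+1; first by rewrite (stab M).
  by rewrite (stab (absz k).+1 M) //; [apply: ltnW|lia].
pose G : lseries K := fun k => lcoef (S (absz k).+1) k.
have bS M : deg_le (S M) 0.
  by apply: deg_le_sum => j _; apply: (deg_leW (buj j)); lia.
have LG : is_laurent G by exists 0 => k; apply: bS.
exists (Laurent LG); apply: lau_eqP => n.
have b1u : deg_le (1 - u) 0 by apply: deg_leB; [exact: deg_le1|apply: (deg_leW bu)].
rewrite -[LHS]/(lcoef _ n) (@lcoefM_eq _ _ (S (absz n).+1) 0 n b1u); last first.
  by move=> k hk; rewrite /lcoef /= /G -/(lcoef _ k) -(stabS (absz n).+1) //; lia.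
have -> : (1 - u) * S (absz n).+1 = 1 - u ^+ (absz n).+1.
  by rewrite /S -opprB mulNr -subrX1 opprB.
by rewrite lcoefB (lcoef_deg_le (buj _)) ?subr0 //; lia.
Qed.

Lemma laurent_inv_exists x : x != 0 -> exists y, x * y = 1.
Proof.
move=> /has_deg_exists [d [hd bd]].
pose m := monomial (- d) (lcoef x d)^-1.
have [g eg] : exists g, (1 - (1 - m * x)) * g = 1.
  apply: subr1_inv_exists => n hn.
  rewrite -/(lcoef _ n) lcoefB lcoef_monomialM lcoef1.
  have [->|n0] := eqVneq n 0; first by rewrite sub0r opprK mulVf // subrr.
  by rewrite (lcoef_deg_le bd (n := n - - d)) ?mulr0 ?subr0 //; lia.
by exists (m * g); rewrite mulrA (mulrC x) -eg; congr (_ * _); ring.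
Qed.

Lemma linv_spec (f : lseries K) : (exists g, is_laurent g /\ lmul f g = lone K) ->
  lmul f (linv f) = lone K.
Proof.
move=> H; rewrite /linv; case: excluded_middle_informative => // H'.
by case: (constructive_indefinite_description _ H') => g [].
Qed.

Lemma linv0 : linv (lzero K) = lzero K.
Proof.
rewrite /linv; case: excluded_middle_informative => // -[g [Lg e]].
exfalso; have := congr1 (fun f => f 0) e; rewrite /lone eqxx.
rewrite (@lmul_wsum _ _ _ 0 0 0) //; last 2 first.
- exact: lzero_laurent.
- by move=> i; rewrite /lzero mul0r eqxx.
by rewrite /wsum big_ord0 => /eqP; rewrite eq_sym oner_eq0.
Qed.

Definition lau_inv x := Laurent (linv_laurent (lval x)).

Lemma lau_mulVf x : x != 0 -> lau_inv x * x = 1.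
Proof.
move=> /laurent_inv_exists [y e]; rewrite mulrC; apply: lval_inj; rewrite lvalM /=.
apply: linv_spec; exists (lval y); split; first exact: lvalP.
by rewrite -lvalM e.
Qed.

Lemma lau_inv0 : lau_inv 0 = 0.
Proof. by apply: lval_inj; rewrite /= linv0. Qed.

HB.instance Definition _ := GRing.ComNzRing_isField.Build laurent lau_mulVf lau_inv0.

Lemma has_deg1 : has_deg 1 0.
Proof. by split; [rewrite lcoef1 eqxx oner_eq0|exact: deg_le1]. Qed.

Lemma has_degV x a : has_deg x a -> has_deg x^-1 (- a).
Proof.
move=> hx; have xn0 := has_deg_neq0 hx.
have [b hb] := has_deg_exists (invr_neq0 xn0).
have := has_degM hx hb; rewrite mulfV // => h1.
by rewrite (_ : - a = b) //; have := has_deg_uniq h1 has_deg1; lia.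
Qed.

End LaurentRing.

Section PolynomialPart.
Variable K : fieldType.
Implicit Types (x y z : laurent K) (p q : {poly K}).

Definition polyL p : laurent K := Laurent (lpoly_laurent p).

Lemma lcoef_polyL p (m : nat) : lcoef (polyL p) (Posz m) = p`_m. Proof. by []. Qed.

Lemma polyLD p q : polyL (p + q) = polyL p + polyL q.
Proof.
by apply: lau_eqP => -[m|m] /=; rewrite /ladd ?addr0 //= coefD.
Qed.

Lemma polyLN p : polyL (- p) = - polyL p.
Proof. by apply: lau_eqP => -[m|m] /=; rewrite /lopp ?oppr0 //= coefN. Qed.

Lemma polyLB p q : polyL (p - q) = polyL p - polyL q.
Proof. by rewrite polyLD polyLN. Qed.

Lemma polyL0 : polyL 0 = 0.
Proof. by apply: lau_eqP => -[m|m] //=; rewrite coef0. Qed.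

Lemma polyLM p q : polyL (p * q) = polyL p * polyL q.
Proof.
have Lp := lpoly_laurent p; have Lq := lpoly_laurent q.
apply: lau_eqP => -[m|m]; rewrite -/(lcoef _ _) /lcoef lvalM.
  rewrite /= coefM (@lmul_wsum _ _ _ 0 m.+1 m) //.
    by apply: eq_bigr => k _; have hk := ltn_ord k; rewrite add0r subzn.
  move=> [i|i] /=; last by rewrite mul0r eqxx.
  case: (leqP i m) => hi; first lia.
  by rewrite (_ : Posz m - Posz i = Negz (i - m).-1) ?mulr0 ?eqxx //; lia.
rewrite (@lmul_wsum _ _ _ 0 0 (Negz m)) //; first by rewrite /wsum big_ord0.
move=> [i|i] /=; last by rewrite mul0r eqxx.
by rewrite (_ : Negz m - Posz i = Negz (m + i)) ?mulr0 ?eqxx //; lia.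
Qed.

Lemma pdegD_le p q : (pdeg (p + q) <= maxn (pdeg p) (pdeg q))%N.
Proof. by rewrite /pdeg; have := size_polyD p q; lia. Qed.

Lemma pdegM_le p q : (pdeg (p * q) <= pdeg p + pdeg q)%N.
Proof. by rewrite /pdeg; have := size_polyMleq p q; lia. Qed.

Definition pdegz p : int := Posz (pdeg p).

Lemma deg_le_polyL p : deg_le (polyL p) (pdegz p).
Proof.
move=> [m|//] hm; rewrite -/(lcoef _ _) lcoef_polyL nth_default //.
by move: hm; rewrite /pdegz /pdeg ltz_nat; case: (size p) => //= s; lia.
Qed.

Lemma has_deg_polyL p : p != 0 -> has_deg (polyL p) (pdegz p).
Proof.
move=> pn0; split; last exact: deg_le_polyL.
by rewrite /pdegz lcoef_polyL /pdeg -lead_coefE lead_coef_eq0.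
Qed.

(* [small x] means [|x| < 1]. *)
Definition small x := deg_le x (-1).

Lemma small_polyL_eq0 p : small (polyL p) -> p = 0.
Proof. by move=> h; apply/polyP => m; rewrite coef0 -lcoef_polyL; apply: h; lia. Qed.

Lemma polyL_inj : injective polyL.
Proof.
move=> p q e; apply/eqP; rewrite -subr_eq0; apply/eqP; apply: small_polyL_eq0.
by rewrite polyLB e subrr; exact: deg_le0.
Qed.

Lemma polyL_eq0 p : (polyL p == 0) = (p == 0).
Proof. by apply/eqP/eqP => [|->]; [rewrite -polyL0 => /polyL_inj|exact: polyL0]. Qed.

Definition ppart x : {poly K} := lpolypart (lval x).

Lemma small_sub_ppart x : small (x - polyL (ppart x)).
Proof.
move=> [m|//] hm; rewrite -/(lcoef _ _) lcoefB lcoef_polyL /ppart /lpolypart coef_poly.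
case: ifP => hlt; first by rewrite subrr.
rewrite subr0; apply: (supp_le_lbound (lvalP x)).
by move: hlt; rewrite ltnS => /negbT; rewrite -ltnNge => h; lia.
Qed.

Lemma ppart_uniq x p : small (x - polyL p) -> ppart x = p.
Proof.
move=> h; apply/eqP; rewrite -subr_eq0; apply/eqP; apply: small_polyL_eq0.
rewrite polyLB (_ : _ - _ = (x - polyL p) - (x - polyL (ppart x))); last by ring.
exact/deg_leB/small_sub_ppart.
Qed.

Lemma ppart_small x : small x -> ppart x = 0.
Proof. by move=> h; apply: ppart_uniq; rewrite polyL0 subr0. Qed.

Lemma has_deg_ppart x (d : nat) : has_deg x (Posz d) -> pdeg (ppart x) = d.
Proof.
move=> hx; have hs := small_sub_ppart x.
have [e|ne] := eqVneq (ppart x) 0.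
  by move: hs; rewrite e polyL0 subr0 => /(has_deg_le hx).
have h2 : has_deg x (pdegz (ppart x)).
  rewrite {1}(_ : x = polyL (ppart x) + (x - polyL (ppart x))); last by ring.
  apply: has_degD; first exact: has_deg_polyL.
  by apply: (deg_leW hs); rewrite /pdegz; lia.
by have := has_deg_uniq hx h2; rewrite /pdegz => -[].
Qed.

Lemma small_has_deg x : small x -> x != 0 -> exists2 d, has_deg x d & d < 0.
Proof.
by move=> s /has_deg_exists [d hd]; exists d => //; have := has_deg_le hd s; lia.
Qed.

Lemma has_deg_small x d : has_deg x d -> d < 0 -> small x.
Proof. by move=> h lt; apply: (has_deg_deg_le h); lia. Qed.

End PolynomialPart.

Section ContinuedFractions.
Variable K : fieldType.
Implicit Types (x y z : laurent K) (b : {poly K}) (bs : seq {poly K}).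

Fixpoint cqL x (n : nat) : option (laurent K) :=
  match n with
  | 0 => Some x
  | n'.+1 => match cqL x n' with
             | None => None
             | Some y => let r := y - polyL (ppart y) in
                         if r == 0 then None else Some r^-1
             end
  end.

Definition pqL x n := omap (@ppart K) (cqL x n).

Definition cfL bs : laurent K := foldr (fun b x => (polyL b + x)^-1) 0 bs.

Lemma lvalD x y : lval (x + y) = ladd (lval x) (lval y). Proof. by []. Qed.
Lemma lvalB x y : lval (x - y) = lsub (lval x) (lval y). Proof. by []. Qed.

Lemma cq_lval x n : cq (lval x) n = omap (@lval K) (cqL x n).
Proof.
elim: n => [|n IH] //=; rewrite IH; case: (cqL x n) => [y|] //=.
case: excluded_middle_informative => e; case: eqP => e' //.
- by exfalso; apply: e'; apply: lval_inj; exact: e.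
- by exfalso; apply: e; exact: (congr1 (@lval K) e').
Qed.

Lemma pq_lval x n : pq (lval x) n = pqL x n.
Proof. by rewrite /pq /pqL cq_lval; case: (cqL x n). Qed.

Lemma cf0_lval bs : cf0 bs = lval (cfL bs).
Proof. by elim: bs => [|b bs IH] //=; rewrite IH. Qed.

Lemma cqL_shift x n : cqL x n.+1 = if cqL x 1 is Some y then cqL y n else None.
Proof.
elim: n => [|n IH]; first by case: (cqL x 1).
have -> : cqL x n.+2 = match cqL x n.+1 with
    | None => None
    | Some y => if y - polyL (ppart y) == 0 then None else Some (y - polyL (ppart y))^-1
    end by [].
by rewrite IH; case: (cqL x 1).
Qed.

Lemma cqL1_small x : small x -> cqL x 1 = if x == 0 then None else Some x^-1.
Proof. by move=> s; rewrite /= ppart_small // polyL0 subr0. Qed.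

Lemma pqL_pdeg_gt0 x n a : pqL x n.+1 = Some a -> (0 < pdeg a)%N.
Proof.
rewrite /pqL /=; case: (cqL x n) => //= z; case: eqP => // ne [<-].
have [[|m] hd //] := small_has_deg (small_sub_ppart z) (introN eqP ne).
by move=> _; rewrite (has_deg_ppart (has_degV hd)).
Qed.

Lemma cqL_small_succ y n : small y -> y != 0 ->
  cqL y 1 = Some y^-1 /\ cqL y n.+2 = cqL (y^-1 - polyL (ppart y^-1)) n.+1.
Proof.
move=> sy yn0; have c1 : cqL y 1 = Some y^-1 by rewrite cqL1_small // (negbTE yn0).
have e : cqL y^-1 1 = cqL (y^-1 - polyL (ppart y^-1)) 1.
  by rewrite [RHS]cqL1_small //; exact: small_sub_ppart.
by split => //; rewrite cqL_shift c1 cqL_shift e -cqL_shift.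
Qed.

Lemma pqL1_neq0 y a : small y -> pqL y 1 = Some a -> y != 0.
Proof. by move=> sy; rewrite /pqL cqL1_small //; case: eqP. Qed.

Definition pos_degs bs := all (fun b => 0 < pdeg b)%N bs.
Definition degsum bs : nat := sumn (map (@pdeg K) bs).

Definition cf_prefix y bs := forall i, (i < size bs)%N -> pqL y i.+1 = Some (nth 0 bs i).

Lemma cf_prefix_pqL y bs i : cf_prefix y bs -> (0 < i <= size bs)%N ->
  pqL y i = Some (nth 0 bs i.-1).
Proof. by case: i => // i hp /hp. Qed.

Lemma degsum_rcons bs b : degsum (rcons bs b) = (degsum bs + pdeg b)%N.
Proof. by rewrite /degsum map_rcons -cats1 sumn_cat /= addn0. Qed.

Lemma size_le_degsum bs : pos_degs bs -> (size bs <= degsum bs)%N.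
Proof. by elim: bs => //= b bs IH /andP[h1 /IH]; rewrite /degsum /=; lia. Qed.

Lemma has_deg_polyL_small b r : (0 < pdeg b)%N -> small r -> has_deg (polyL b + r) (pdegz b).
Proof.
move=> hb hr; apply: has_degD.
  by apply: has_deg_polyL; apply: contraTneq hb => ->; rewrite /pdeg size_poly0.
by apply: (deg_leW hr); rewrite /pdegz; lia.
Qed.

Lemma has_deg_cfL_cons b bs : (0 < pdeg b)%N -> small (cfL bs) ->
  has_deg (cfL (b :: bs)) (- pdegz b).
Proof. by move=> hb hr; apply/has_degV/has_deg_polyL_small. Qed.

Lemma cfL_small bs : pos_degs bs -> small (cfL bs).
Proof.
elim: bs => [_|b bs IH /andP[hb /IH hr]]; first exact: deg_le0.
by apply: (has_deg_small (has_deg_cfL_cons hb hr)); rewrite /pdegz; lia.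
Qed.

Lemma cf_prefix_cons y b bs : small y -> cf_prefix y (b :: bs) ->
  [/\ y != 0, b = ppart y^-1 & cf_prefix (y^-1 - polyL (ppart y^-1)) bs].
Proof.
move=> sy hp; have h0 := hp 0%N erefl; have yn0 := pqL1_neq0 sy h0.
split => //; first by move: h0; rewrite /pqL (cqL_small_succ 0 sy yn0).1 => -[].
move=> i hi; have := hp i.+1 hi; rewrite /pqL.
by have [_ ->] := cqL_small_succ i sy yn0.
Qed.

Lemma cf_prefix_pos_degs y bs : cf_prefix y bs -> pos_degs bs.
Proof. by move=> hp; apply/allP => c /(nthP 0) [i /hp hi <-]; apply: pqL_pdeg_gt0 hi. Qed.

Lemma cf_prefix_rcons y bs b :
  cf_prefix y bs -> pqL y (size bs).+1 = Some b -> cf_prefix y (rcons bs b).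
Proof.
move=> hp hb i; rewrite size_rcons ltnS leq_eqVlt nth_rcons => /orP[/eqP ->|hi].
  by rewrite ltnn eqxx.
by rewrite hi; apply: hp.
Qed.

Lemma cf_prefix_take y bs n : cf_prefix y bs -> cf_prefix y (take n bs).
Proof.
move=> hp i; rewrite size_take => hi.
have [hin his] : (i < n)%N /\ (i < size bs)%N by move: hi; case: (ltnP n (size bs)); lia.
by rewrite nth_take //; apply: hp.
Qed.

(* The recursion behind the next three lemmas: for [y = 1/(b + y')] and
   [c = 1/(b + r)] one has [y - c = (r - y') / ((b + y') (b + r))], and
   [deg (b + y') = deg (b + r) = deg b]. *)
Lemma cf_prefix_err y bs a : small y -> cf_prefix y bs -> pqL y (size bs).+1 = Some a ->
  has_deg (y - cfL bs) (- (2 * degsum bs + pdeg a)%N%:Z).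
Proof.
elim: bs y a => [|b bs IH] y a sy.
  move=> _ h; have yn0 := pqL1_neq0 sy h.
  move: h; rewrite /pqL cqL1_small // (negbTE yn0) => -[<-].
  have [[|m] hd //] := small_has_deg sy yn0.
  by move=> _; rewrite subr0 /degsum /= (has_deg_ppart (has_degV hd)).
move=> hp ha; have [yn0 eb hp'] := cf_prefix_cons sy hp.
set y' := y^-1 - _ in hp'; have sy' : small y' := small_sub_ppart _.
have ha' : pqL y' (size bs).+1 = Some a.
  by move: ha; rewrite /pqL [size _]/= (cqL_small_succ (size bs) sy yn0).2.
have hb : (0 < pdeg b)%N by apply: (@pqL_pdeg_gt0 y 0); exact: (hp 0%N erefl).
have sr := cfL_small (cf_prefix_pos_degs hp').
have ey : y = (polyL b + y')^-1 by rewrite /y' -eb addrC subrK invrK.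
have d1 := has_deg_polyL_small hb sy'; have d2 := has_deg_polyL_small hb sr.
have -> : y - cfL (b :: bs) = (cfL bs - y') * (polyL b + y')^-1 * (polyL b + cfL bs)^-1.
  by rewrite ey /=; field; rewrite (has_deg_neq0 d1) (has_deg_neq0 d2).
have := has_degM (has_degM (has_degN (IH y' a sy' hp' ha')) (has_degV d1)) (has_degV d2).
by rewrite opprB /degsum /= -/(degsum bs) /pdegz; congr has_deg; lia.
Qed.

Lemma cf_prefix_exact y bs : small y -> cf_prefix y bs -> pqL y (size bs).+1 = None ->
  y = cfL bs.
Proof.
elim: bs y => [|b bs IH] y sy.
  by move=> _; rewrite /pqL cqL1_small //; case: eqP.
move=> hp ha; have [yn0 eb hp'] := cf_prefix_cons sy hp.
have ha' : pqL (y^-1 - polyL (ppart y^-1)) (size bs).+1 = None.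
  by move: ha; rewrite /pqL [size _]/= (cqL_small_succ (size bs) sy yn0).2.
by rewrite /= -(IH _ (small_sub_ppart _) hp' ha') -eb addrC subrK invrK.
Qed.

Lemma cf_prefix_err_le y bs : small y -> cf_prefix y bs ->
  deg_le (y - cfL bs) (- (2 * degsum bs)%N%:Z - 1).
Proof.
move=> sy hp; case ha: (pqL y (size bs).+1) => [a|].
  apply: (has_deg_deg_le (cf_prefix_err sy hp ha)).
  by have := pqL_pdeg_gt0 ha; lia.
by rewrite -(cf_prefix_exact sy hp ha) subrr; exact: deg_le0.
Qed.

Lemma cf_prefix_of_err_le y bs : small y -> pos_degs bs ->
  deg_le (y - cfL bs) (- (2 * degsum bs)%N%:Z - 1) -> cf_prefix y bs.
Proof.
elim: bs y => [|b bs IH] y sy; first by move=> _ _ i.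
case/andP => hb alb hl.
have sr := cfL_small alb; have dc := has_deg_cfL_cons hb sr.
set c := cfL (b :: bs) in hl dc.
have Db : (pdeg b <= degsum (b :: bs))%N by rewrite /degsum /=; lia.
have dy : has_deg y (- pdegz b).
  rewrite (_ : y = c + (y - c)); last by ring.
  by apply: has_degD => //; apply: (deg_leW hl); rewrite /pdegz; lia.
have yn0 := has_deg_neq0 dy; have cn0 := has_deg_neq0 dc.
have dz : has_deg y^-1 (pdegz b) by have := has_degV dy; rewrite opprK.
have ez : y^-1 - (polyL b + cfL bs) = - (y - c) * y^-1 * c^-1.
  have -> : polyL b + cfL bs = c^-1 by rewrite /c /= invrK.
  by field; rewrite yn0 cn0.
have hl2 : deg_le (y^-1 - (polyL b + cfL bs)) (- (2 * degsum bs)%N%:Z - 1).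
  rewrite ez; apply: (deg_leW (deg_leM (deg_leM (deg_leN hl) (has_deg_deg_le dz (lexx _)))
      (has_deg_deg_le (has_degV dc) (lexx _)))).
  by rewrite /degsum /= -/(degsum bs) /pdegz; lia.
have sz : small (y^-1 - polyL b).
  rewrite (_ : _ - _ = cfL bs + (y^-1 - (polyL b + cfL bs))); last by ring.
  by apply: deg_leD => //; apply: (deg_leW hl2); lia.
have eb := ppart_uniq sz.
have hp' : cf_prefix (y^-1 - polyL (ppart y^-1)) bs.
  apply: IH => //; first by rewrite eb.
  by rewrite eb (_ : _ - _ - _ = y^-1 - (polyL b + cfL bs)) //; ring.
move=> [|i] hi; rewrite /pqL.
  by rewrite (cqL_small_succ 0 sy yn0).1 /= eb.
by rewrite (cqL_small_succ i sy yn0).2; apply: hp'.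
Qed.

Lemma cf_prefix_cfL bs : pos_degs bs -> cf_prefix (cfL bs) bs.
Proof.
move=> h; apply: cf_prefix_of_err_le => //; first exact: cfL_small.
by rewrite subrr; exact: deg_le0.
Qed.

Lemma cfL_ratio bs : exists p q : {poly K},
  [/\ q != 0, (pdeg q <= degsum bs)%N, (pdeg p <= degsum bs)%N &
       cfL bs = polyL p / polyL q].
Proof.
elim: bs => [|b bs [P [Q [Qn0 sQ sP e]]]].
  by exists 0, 1; rewrite oner_eq0 polyL0 mul0r /pdeg size_poly1 size_poly0.
have hQ : polyL Q != 0 by rewrite polyL_eq0.
have e1 : polyL b + cfL bs = polyL (b * Q + P) / polyL Q.
  by rewrite e polyLD polyLM; field.
have [z|nz] := eqVneq (b * Q + P) 0.
  exists 0, 1; rewrite oner_eq0 /= e1 z !polyL0 !mul0r invr0.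
  by rewrite /pdeg size_poly1 size_poly0.
exists Q, (b * Q + P); split => //; last by rewrite /= e1 invfM invrK mulrC.
- apply: (leq_trans (pdegD_le _ _)); rewrite geq_max.
  by have := pdegM_le b Q; move: sQ sP; rewrite /degsum /= -/(degsum bs); lia.
- by apply: (leq_trans sQ); rewrite /degsum /= leq_addl.
Qed.

End ContinuedFractions.

Section Convergents.
Variable K : fieldType.
Implicit Types bs : seq {poly K}.

Lemma cf0_take_coef bs m (k : int) : pos_degs bs -> - (2 * m)%N%:Z <= k ->
  cf0 (take m bs) k = cf0 bs k.
Proof.
move=> pb hk; rewrite !cf0_lval.
have pt : pos_degs (take m bs).
  by move: pb; rewrite /pos_degs -{1}(cat_take_drop m bs) all_cat => /andP[].
have [hm|hm] := ltnP m (size bs); last by rewrite take_oversize.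
have := cf_prefix_err_le (cfL_small pb) (cf_prefix_take (n := m) (cf_prefix_cfL pb)).
move=> /lcoef_eq_deg_leB h; symmetry; apply: h.
by have := size_le_degsum pt; rewrite size_take hm; lia.
Qed.

(* The coefficient of [t^k] is frozen from [n = |k|] on. *)
Lemma cf0_lconv (f : nat -> seq {poly K}) :
  (forall n, pos_degs (f n)) -> (forall m n, (m <= n)%N -> f m = take m (f n)) ->
  lconv (fun n => cf0 (f n)) (fun k => cf0 (f (absz k)) k).
Proof.
move=> pf ft m; exists (absz m) => n hn k hk /=.
have [le|lt] := leqP n (absz k).
  by rewrite (ft n (absz k) le) cf0_take_coef //; lia.
by rewrite (ft (absz k) n (ltnW lt)) cf0_take_coef //; lia.
Qed.

End Convergents.

Section Algorithm.
Variable K : fieldType.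
Variable A : laurent K.
Hypothesis ppartA : ppart A = 0.
Implicit Types (b c x : {poly K}) (B C X Y : seq {poly K}).

Lemma small_sub_cfL X : pos_degs X -> small (A - cfL X).
Proof.
move=> pX; apply: deg_leB (cfL_small pX).
by have := small_sub_ppart A; rewrite ppartA polyL0 subr0.
Qed.

Definition stepL B C : alg_st K :=
  if A == cfL B + cfL C then Stop B C else
  match pqL (A - cfL C) (size B).+1 with
  | None => Fail B C
  | Some b =>
      if A == cfL (rcons B b) + cfL C then Stop (rcons B b) C else
      match pqL (A - cfL (rcons B b)) (size B).+1 with
      | None => Fail (rcons B b) C
      | Some c => Run (rcons B b) (rcons C c)
      end
  end.

Lemma alg_step_lval B C : alg_step (lval A) (Run B C) = stepL B C.
Proof.
have eqA X Y : (lval A = ladd (cf0 X) (cf0 Y)) <-> (A = cfL X + cfL Y).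
  by rewrite !cf0_lval -lvalD; split => [/lval_inj|->].
rewrite /alg_step /stepL; case: excluded_middle_informative => /= h1.
  by have -> : A == cfL B + cfL C by apply/eqP/eqA.
have -> : (A == cfL B + cfL C) = false by apply/negbTE/eqP => /eqA.
rewrite cf0_lval -lvalB pq_lval; case: (pqL _ _) => [b|] //.
case: excluded_middle_informative => /= h2.
  by have -> : A == cfL (rcons B b) + cfL C by apply/eqP/eqA; rewrite [cf0 C]cf0_lval.
have -> : A == cfL (rcons B b) + cfL C = false.
  by apply/negbTE/eqP => /eqA; rewrite [cf0 C]cf0_lval.
by rewrite cf0_lval -lvalB pq_lval.
Qed.

(* Extending [X] by the next partial quotient [x] of [A - [0;Y]]; the roles of
   [X] and [Y] then swap. *)
Definition half_step X Y x := [/\ pqL (A - cfL Y) (size X).+1 = Some x,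
  has_deg (A - cfL Y - cfL X) (- (2 * degsum X + pdeg x)%N%:Z),
  (2 * (degsum Y - degsum X) < pdeg x)%N,
  cf_prefix (A - cfL Y) (rcons X x) &
  cf_prefix (A - cfL (rcons X x)) Y].

(* Both [x] and the next partial quotient [y] of [A - [0;X]] measure the same
   error [A - [0;X] - [0;Y]], so [2 degsum X + deg x = 2 degsum Y + deg y]. *)
Lemma half_step_exists X Y : cf_prefix (A - cfL Y) X -> cf_prefix (A - cfL X) Y ->
  (degsum X <= degsum Y)%N -> A != cfL X + cfL Y -> exists x, half_step X Y x.
Proof.
move=> pX pY le neq.
have sY := small_sub_cfL (cf_prefix_pos_degs pY).
have sX := small_sub_cfL (cf_prefix_pos_degs pX).
have ne1 : A - cfL Y != cfL X by apply: contraNneq neq => <-; rewrite subrK.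
have ne2 : A - cfL X != cfL Y by apply: contraNneq neq => <-; rewrite addrC subrK.
case ex: (pqL (A - cfL Y) (size X).+1) => [x|]; last first.
  by have := cf_prefix_exact sY pX ex; move/eqP: ne1.
case ey: (pqL (A - cfL X) (size Y).+1) => [y|]; last first.
  by have := cf_prefix_exact sX pY ey; move/eqP: ne2.
have hx := cf_prefix_err sY pX ex.
have hy := cf_prefix_err sX pY ey.
rewrite (_ : A - cfL X - cfL Y = A - cfL Y - cfL X) in hy; last by ring.
have := has_deg_uniq hx hy; have := pqL_pdeg_gt0 ey => y_gt0 edeg.
have pXx : cf_prefix (A - cfL Y) (rcons X x) by apply: cf_prefix_rcons.
exists x; split => //; first lia.
apply: cf_prefix_of_err_le; first exact/small_sub_cfL/cf_prefix_pos_degs/pXx.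
  exact: cf_prefix_pos_degs pY.
rewrite (_ : _ - _ - _ = A - cfL Y - cfL (rcons X x)); last by ring.
by apply: (deg_leW (cf_prefix_err_le sY pXx)); rewrite degsum_rcons; lia.
Qed.

Record run_inv n B C : Prop := RunInv {
  run_size_B : size B = n;
  run_size_C : size C = n;
  run_prefix_B : cf_prefix (A - cfL C) B;
  run_prefix_C : cf_prefix (A - cfL B) C;
  run_gap : (degsum B + 2 * n <= degsum C)%N;
  run_last : (0 < n)%N -> (pdeg (last 0%R C) < 2 * (degsum C - degsum B))%N }.

Lemma run_inv0 : run_inv 0 [::] [::].
Proof. by split. Qed.

Lemma run_inv_step n B C b c : run_inv n B C ->
  half_step B C b -> half_step C (rcons B b) c -> run_inv n.+1 (rcons B b) (rcons C c).
Proof.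
case=> sB sC _ _ gap _ [_ _ hb _ _] [_ _ hc pC pB].
split => //; rewrite ?size_rcons ?sB ?sC ?last_rcons //;
  move: hb hc; rewrite !degsum_rcons; lia.
Qed.

Variant step_spec B C : alg_st K -> Prop :=
| StepStop : A = cfL B + cfL C -> step_spec B C (Stop B C)
| StepStopHalf b : half_step B C b -> A = cfL (rcons B b) + cfL C ->
    step_spec B C (Stop (rcons B b) C)
| StepRun b c : half_step B C b -> half_step C (rcons B b) c ->
    step_spec B C (Run (rcons B b) (rcons C c)).

Lemma stepLP n B C : run_inv n B C -> step_spec B C (stepL B C).
Proof.
case=> sB sC pB pC gap _; rewrite /stepL.
have [h1|h1] := eqVneq A (cfL B + cfL C); first exact: StepStop.
have [b hb] := half_step_exists pB pC (leq_trans (leq_addr _ _) gap) h1.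
have [-> _ degb pB' pC'] := hb.
have [h2|h2] := eqVneq A (cfL (rcons B b) + cfL C); first exact: StepStopHalf.
have h2' : A != cfL C + cfL (rcons B b) by rewrite addrC.
have le : (degsum C <= degsum (rcons B b))%N by rewrite degsum_rcons; lia.
have [c hc] := half_step_exists pC' pB' le h2'.
by have [ec _ _ _ _] := hc; rewrite sB -sC ec; apply: StepRun.
Qed.

Local Notation st n := (alg_state (lval A) n).

Lemma alg_stateS k : st k.+1 = alg_step (lval A) (st k).
Proof. by []. Qed.

Definition state_ok k (s : alg_st K) := match s with
  | Run B C => run_inv k B C
  | Stop B C => [/\ A = cfL B + cfL C, (size B <= k)%N & (size C <= k)%N]
  | Fail _ _ => False
  end.

Lemma alg_state_ok k : state_ok k (st k).
Proof.
elim: k => [|k IH]; first exact: run_inv0.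
rewrite alg_stateS; case: (st k) IH => [B C ri|B C [h hB hC]|//]; last first.
  by split => //; apply: leqW.
have [sB sC _ _ _ _] := ri; rewrite alg_step_lval.
case: (stepLP ri) => [h|b _ h|b c hb hc]; last exact: run_inv_step.
  by rewrite /= sB sC.
by rewrite /= size_rcons sB sC.
Qed.

Lemma alg_state_no_fail k B C : st k <> Fail B C.
Proof. by move=> e; have := alg_state_ok k; rewrite e. Qed.

Lemma alg_state_run k B C : st k = Run B C -> run_inv k B C.
Proof. by move=> e; have := alg_state_ok k; rewrite e. Qed.

Lemma alg_state_stop k B C : st k = Stop B C -> A = cfL B + cfL C.
Proof. by move=> e; have := alg_state_ok k; rewrite e => -[]. Qed.

Lemma size_alg_state k : (size (st_b (st k)) <= k)%N /\ (size (st_c (st k)) <= k)%N.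
Proof.
have := alg_state_ok k; case: (st k) => [B C [-> -> _ _ _ _]|B C [_ -> ->]|] //.
Qed.

Lemma alg_state_succ k :
  (exists B C, [/\ st k = Run B C, run_inv k B C & step_spec B C (st k.+1)]) \/
  (st k.+1 = st k /\ is_stop (st k)).
Proof.
have := alg_state_ok k; rewrite alg_stateS.
case: (st k) => [B C ri|B C _|//]; last by right.
by left; exists B, C; split => //; rewrite alg_step_lval; apply: stepLP ri.
Qed.

Lemma alg_state_take_succ k :
  st_b (st k) = take k (st_b (st k.+1)) /\ st_c (st k) = take k (st_c (st k.+1)).
Proof.
case: (alg_state_succ k) => [[B [C [-> [sB sC _ _ _ _] sp]]]|[-> _]]; last first.
  by have [hb hc] := size_alg_state k; rewrite !take_oversize.
by case: sp => [_|b _ _|b c _ _]; rewrite /= -?cats1 -{1}sB -{1}sC ?take_size_cat ?take_size.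
Qed.

Lemma alg_state_take i k : (i <= k)%N ->
  st_b (st i) = take i (st_b (st k)) /\ st_c (st i) = take i (st_c (st k)).
Proof.
move=> /subnK <-; elim: (k - i)%N => [|d [IHb IHc]].
  by have [hb hc] := size_alg_state i; rewrite add0n !take_oversize.
have [eb ec] := alg_state_take_succ (d + i).
by rewrite addSn IHb IHc eb ec !take_takel // leq_addl.
Qed.

Lemma nth_opt_take (T : Type) (x0 : T) (L : seq T) i :
  (if (0 < i <= size (take i L))%N then Some (nth x0 (take i L) i.-1) else None) =
  (if (0 < i <= size L)%N then Some (nth x0 L i.-1) else None).
Proof.
have [lt|ge] := ltnP i (size L); last by rewrite take_oversize.
rewrite size_takel ?leqnn ?(ltnW lt) //.
by case: i lt => // i _; rewrite nth_take.
Qed.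

Lemma alg_b_nth i k : (i <= k)%N -> alg_b (lval A) i =
  if (0 < i <= size (st_b (st k)))%N then Some (nth 0 (st_b (st k)) i.-1) else None.
Proof. by move=> ik; rewrite /alg_b (alg_state_take ik).1 nth_opt_take. Qed.

Lemma alg_c_nth i k : (i <= k)%N -> alg_c (lval A) i =
  if (0 < i <= size (st_c (st k)))%N then Some (nth 0 (st_c (st k)) i.-1) else None.
Proof. by move=> ik; rewrite /alg_c (alg_state_take ik).2 nth_opt_take. Qed.

Lemma alg_bsE n : alg_bs (lval A) n = st_b (st n).
Proof. exact/take_oversize/(size_alg_state n).1. Qed.

Lemma alg_csE n : alg_cs (lval A) n = st_c (st n).
Proof. exact/take_oversize/(size_alg_state n).2. Qed.

Lemma alg_b_succ n b : alg_b (lval A) n.+1 = Some b -> exists B C,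
  [/\ st n = Run B C, run_inv n B C, half_step B C b & st_b (st n.+1) = rcons B b].
Proof.
rewrite /alg_b; case: ifP => // /andP[_ hn] [<-].
case: (alg_state_succ n) => [[B [C [e ri sp]]]|[e _]]; last first.
  by have := (size_alg_state n).1; rewrite -e; lia.
exists B, C; have [sB _ _ _ _ _] := ri.
rewrite -alg_stateS; move: hn; case: sp => [_|b' hb _|b' c hb _];
  rewrite /= ?size_rcons sB ?ltnn // => _;
  by rewrite nth_rcons sB ltnn eqxx.
Qed.

Lemma alg_c_succ n c : alg_c (lval A) n.+1 = Some c -> exists B C b,
  [/\ st n = Run B C, run_inv n B C, half_step B C b, half_step C (rcons B b) c &
      st n.+1 = Run (rcons B b) (rcons C c)].
Proof.
rewrite /alg_c; case: ifP => // /andP[_ hn] [<-].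
case: (alg_state_succ n) => [[B [C [e ri sp]]]|[e _]]; last first.
  by have := (size_alg_state n).2; rewrite -e; lia.
exists B, C; have [_ sC _ _ _ _] := ri.
rewrite -alg_stateS; move: hn; case: sp => [_|b' hb _|b' c' hb hc];
  rewrite /= ?size_rcons sC ?ltnn // => _.
by exists b'; rewrite nth_rcons sC ltnn eqxx.
Qed.

Lemma pq_sub_cf0 X i : pq (lsub (lval A) (cf0 X)) i = pqL (A - cfL X) i.
Proof. by rewrite cf0_lval -lvalB pq_lval. Qed.

Lemma alg_c_pq_sub_bs n b i : alg_b (lval A) n = Some b -> (0 < i < n)%N ->
  alg_c (lval A) i = pq (lsub (lval A) (cf0 (alg_bs (lval A) n))) i.
Proof.
case: n => // n /alg_b_succ [B [C [e [_ sC _ _ _ _] [_ _ _ _ pC] eb]]] hi.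
have hi' : (0 < i <= size C)%N by rewrite sC; lia.
rewrite pq_sub_cf0 alg_bsE eb (cf_prefix_pqL pC hi') (@alg_c_nth i n); last lia.
by rewrite e /= hi'.
Qed.

Lemma alg_bc_pq_sub_cs n c i : alg_c (lval A) n = Some c -> (0 < i <= n)%N ->
  alg_b (lval A) i = pq (lsub (lval A) (cf0 (alg_cs (lval A) n))) i /\
  alg_c (lval A) i = pq (lsub (lval A) (cf0 (alg_bs (lval A) n))) i.
Proof.
case: n => // n /alg_c_succ [B [C [b [_ _ _ _ e]]]] hi.
have [sB sC pB pC _ _] := alg_state_run e; have /andP[_ iN] := hi.
rewrite !pq_sub_cf0 alg_bsE alg_csE (alg_b_nth iN) (alg_c_nth iN) e /= sB sC hi.
by rewrite (cf_prefix_pqL pB) ?(cf_prefix_pqL pC) ?sB ?sC.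
Qed.

Lemma pdeg_c1_gt b1 c1 : alg_b (lval A) 1 = Some b1 -> alg_c (lval A) 1 = Some c1 ->
  (2 * pdeg b1 + 1 <= pdeg c1)%N.
Proof.
move=> hb /alg_c_succ [B [C [b [_ [/size0nil eB /size0nil eC _ _ _ _] _ [_ _ hc _ _] e]]]].
move: hb hc; rewrite (@alg_b_nth 1 1) // e eB eC /= => -[<-].
by rewrite /degsum /=; lia.
Qed.

Lemma pdeg_b_gt_c n b c : (2 <= n)%N -> alg_b (lval A) n = Some b ->
  alg_c (lval A) n.-1 = Some c -> (pdeg c + 2 <= pdeg b)%N.
Proof.
case: n => // n n0 /alg_b_succ [B [C [e [_ sC _ _ _ hlast] [_ _ hb _ _] _]]].
have {}n0 : (0 < n)%N := n0.
rewrite /= (@alg_c_nth n n) // e /= sC leqnn n0 => -[<-].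
have := hlast n0; rewrite -nth_last sC.
(* the two zero polynomials differ by their elaboration; [set] identifies them *)
by set x := pdeg (nth _ C _); lia.
Qed.

Lemma pdeg_c_gt_b n b c : alg_b (lval A) n = Some b -> alg_c (lval A) n = Some c ->
  (pdeg b + 2 <= pdeg c)%N.
Proof.
case: n => // n hb /alg_c_succ [B [C [b' [_ [sB _ _ _ _ _] [_ _ hb' _ _] [_ _ hc _ _] e]]]].
move: hb; rewrite (@alg_b_nth n.+1 n.+1) // e /= size_rcons sB leqnn.
rewrite nth_rcons -sB ltnn eqxx => -[<-].
by move: hb' hc; rewrite degsum_rcons; lia.
Qed.

Section NeverStops.
Hypothesis runs : forall n, exists B C, st n = Run B C.

Lemma run_inv_alg n : run_inv n (alg_bs (lval A) n) (alg_cs (lval A) n).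
Proof. by have [B [C e]] := runs n; rewrite alg_bsE alg_csE e; apply: alg_state_run. Qed.

Lemma never_stops_sum :
  exists beta gamma, alg_result (lval A) beta gamma /\ lval A = ladd beta gamma.
Proof.
have bs_take m n : (m <= n)%N -> alg_bs (lval A) m = take m (alg_bs (lval A) n).
  by move=> mn; rewrite !alg_bsE (alg_state_take mn).1.
have cs_take m n : (m <= n)%N -> alg_cs (lval A) m = take m (alg_cs (lval A) n).
  by move=> mn; rewrite !alg_csE (alg_state_take mn).2.
exists (fun k => cf0 (alg_bs (lval A) (absz k)) k),
       (fun k => cf0 (alg_cs (lval A) (absz k)) k); split.
  right; split => //; split; apply: cf0_lconv => // n.
    exact: cf_prefix_pos_degs (run_prefix_B (run_inv_alg n)).
  exact: cf_prefix_pos_degs (run_prefix_C (run_inv_alg n)).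
apply: functional_extensionality => k; rewrite /ladd !cf0_lval.
have [sB _ pB pC _ _] := run_inv_alg (absz k).
set bs := alg_bs _ _ in sB pB pC *; set cs := alg_cs _ _ in pB pC *.
have err := cf_prefix_err_le (small_sub_cfL (cf_prefix_pos_degs pC)) pB.
have := size_le_degsum (cf_prefix_pos_degs pB); rewrite sB => hsize.
have -> : lval A k = lcoef (A - cfL cs) k + lcoef (cfL cs) k by rewrite lcoefB subrK.
by rewrite (lcoef_eq_deg_leB err) //; lia.
Qed.

End NeverStops.

Lemma alg_result_sum :
  exists beta gamma, alg_result (lval A) beta gamma /\ lval A = ladd beta gamma.
Proof.
have [[n [B [C e]]]|nostop] := classic (exists n B C, st n = Stop B C).
  exists (cf0 B), (cf0 C); split; first by left; exists n, B, C.
  by rewrite !cf0_lval -lvalD -(alg_state_stop e).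
apply: never_stops_sum => n; case e: (st n) => [B C|B C|B C]; first by exists B, C.
  by case: nostop; exists n, B, C.
by case: (alg_state_no_fail e).
Qed.

Section Rational.
Variables p q : {poly K}.
Hypothesis qn0 : q != 0.
Hypothesis A_ratio : A = polyL p / polyL q.

(* The error [A - [0;X] - [0;Y]] is a nonzero rational function with
   denominator of degree at most [deg q + degsum X + degsum Y]. *)
Lemma err_deg_le_rat X Y (d : nat) : has_deg (A - cfL X - cfL Y) (- d%:Z) ->
  (d <= pdeg q + degsum X + degsum Y)%N.
Proof.
move=> hd.
have [P1 [Q1 [Q1n0 sQ1 _ e1]]] := cfL_ratio X.
have [P2 [Q2 [Q2n0 sQ2 _ e2]]] := cfL_ratio Y.
pose N := p * Q1 * Q2 - q * P1 * Q2 - q * Q1 * P2.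
have eN : (A - cfL X - cfL Y) * polyL (q * Q1 * Q2) = polyL N.
  rewrite A_ratio e1 e2 /N !polyLB !polyLM; field.
  by rewrite !polyL_eq0 qn0 Q1n0 Q2n0.
have dq : has_deg (polyL (q * Q1 * Q2)) (pdegz q + pdegz Q1 + pdegz Q2).
  by rewrite !polyLM; apply: has_degM; [apply: has_degM|]; apply: has_deg_polyL.
have Nn0 : N != 0.
  by rewrite -polyL_eq0 -eN mulf_neq0 ?(has_deg_neq0 hd) ?(has_deg_neq0 dq).
have hN := has_degM hd dq; rewrite eN in hN.
have := has_deg_uniq hN (has_deg_polyL Nn0).
by move: sQ1 sQ2; rewrite /pdegz; lia.
Qed.

Lemma run_index_le_rat n B C : st n.+1 = Run B C -> (2 * n.+1 <= pdeg q)%N.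
Proof.
move=> e; have [_ _ _ _ gap _] := alg_state_run e.
case: (alg_state_succ n) => [[B0 [C0 [_ _ sp]]]|[en stop]]; last by move: stop; rewrite -en e.
case: sp e gap => // b c _ [_ hd _ _ _] [<- <-].
have := err_deg_le_rat hd; rewrite !degsum_rcons; lia.
Qed.

Lemma rat_alg_stops : exists n, (2 * n <= pdeg q)%N /\ is_stop (st n.+1).
Proof.
exists (pdeg q)./2; split; first lia.
case e: (st _) => [B C|//|B C]; last by case: (alg_state_no_fail e).
by have := run_index_le_rat e; lia.
Qed.

End Rational.

End Algorithm.

Lemma cf0_ratfun (K : fieldType) (bs : seq {poly K}) : is_ratfun (cf0 bs).
Proof.
have [p [q [qn0 _ _ e]]] := cfL_ratio bs.
by exists p, q; split => //; rewrite cf0_lval e.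
Qed.

Theorem theorem4p3 (K : fieldType) (alpha : lseries K) :
  is_laurent alpha -> pq alpha 0 = Some 0 ->
  (* (1) *)
  ((forall n bs cs, alg_state alpha n <> Fail bs cs) /\
   (exists beta gamma, alg_result alpha beta gamma /\ alpha = ladd beta gamma) /\
   (forall (n : nat) (b : {poly K}), (0 < n)%N -> alg_b alpha n = Some b ->
      forall i : nat, (0 < i < n)%N ->
        alg_c alpha i = pq (lsub alpha (cf0 (alg_bs alpha n))) i) /\
   (forall (n : nat) (c : {poly K}), (0 < n)%N -> alg_c alpha n = Some c ->
      forall i : nat, (0 < i <= n)%N ->
        alg_b alpha i = pq (lsub alpha (cf0 (alg_cs alpha n))) i /\
        alg_c alpha i = pq (lsub alpha (cf0 (alg_bs alpha n))) i)) /\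
  (* (2) *)
  ((forall b1 c1, alg_b alpha 1 = Some b1 -> alg_c alpha 1 = Some c1 ->
      (2 * pdeg b1 + 1 <= pdeg c1)%N) /\
   (forall (n : nat) b c, (2 <= n)%N -> alg_b alpha n = Some b ->
      alg_c alpha n.-1 = Some c -> (pdeg c + 2 <= pdeg b)%N) /\
   (forall (n : nat) b c, (2 <= n)%N -> alg_b alpha n = Some b ->
      alg_c alpha n = Some c -> (pdeg b + 2 <= pdeg c)%N)) /\
  (* (3) *)
  (forall p q : {poly K}, q != 0 ->
     alpha = lmul (lpoly p) (linv (lpoly q)) ->
     (exists n : nat, (2 * n <= pdeg q)%N /\ is_stop (alg_state alpha n.+1)) /\
     (forall beta gamma, alg_result alpha beta gamma ->
        is_ratfun beta /\ is_ratfun gamma)).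
Proof.
move=> La h0; pose A := Laurent La.
have ppA : ppart A = 0 by move: h0; rewrite (pq_lval A 0) => -[].
change alpha with (lval A).
split; [split; [|split; [|split]]|split; [split; [|split]|]].
- exact: alg_state_no_fail ppA.
- exact: alg_result_sum ppA.
- by move=> n b _ hb i; apply: alg_c_pq_sub_bs hb.
- by move=> n c _ hc i; apply: alg_bc_pq_sub_cs hc.
- exact: pdeg_c1_gt ppA.
- exact: pdeg_b_gt_c ppA.
- by move=> n b c _ hb; apply: (pdeg_c_gt_b ppA hb).
move=> p q qn0 eA; have A_ratio : A = polyL p / polyL q by apply: lval_inj.
have [n [hn stop]] := rat_alg_stops ppA qn0 A_ratio.
split; first by exists n.
move=> beta gamma [[m [bs [cs [_ [-> ->]]]]]|[runs _]]; first by split; apply: cf0_ratfun.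
by have [bs [cs e]] := runs n.+1; move: stop; rewrite e.
Qed.
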